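(* Let $(E,\|\cdot\|)$ be a finite-dimensional normed space over $K$ and let $D\subseteq E$ be a one-dimensional subspace. Then for each $f\in D'$ with $\|f\|=1$ there exists an extension $\tilde f\in E'$ of $f$ with $\|\tilde f\|=1$ if and only if either $\|D\|\cap V_K=\emptyset$, or there is a subspace $F\subseteq E$ such that $E\cong D\oplus F$ (i.e. $E=D+F$ and $\|d+u\|=\max(\|d\|,\|u\|)$ for all $d\in D$, $u\in F$).
   Context: $K$ is a complete non-archimedean non-trivially valued field which is not spherically complete, with valuation group $V_K=\{|x|:x\in K\setminus\{0\}\}$. Normed spaces are non-archimedean normed spaces over $K$; $E'$ is the dual with operator norm. $\|D\|=\{\|d\|:d\in D\}$. *)

From HB Require Import structures.
From mathcomp Require Import all_boot all_order all_algebra.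
From mathcomp Require Import classical_sets reals.
Set Implicit Arguments. Unset Strict Implicit. Unset Printing Implicit Defensive.
Import Order.TTheory GRing.Theory Num.Theory.
Local Open Scope ring_scope.
Local Open Scope classical_set_scope.

Record na_abs (K : fieldType) (R : realType) (abs : K -> R) : Prop := {
  abs_ge0 : forall x, 0 <= abs x;
  abs_eq0 : forall x, (abs x = 0) <-> (x = 0);
  absM : forall x y, abs (x * y) = abs x * abs y;
  abs_ultra : forall x y, abs (x + y) <= Num.max (abs x) (abs y) }.

Definition nontrivial_abs (K : fieldType) (R : realType) (abs : K -> R) : Prop :=
  exists x : K, abs x != 0 /\ abs x != 1.

Definition complete_abs (K : fieldType) (R : realType) (abs : K -> R) : Prop :=
  forall u : nat -> K,
    (forall e : R, 0 < e -> exists M, forall m n, (M <= m)%N -> (M <= n)%N ->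
        abs (u m - u n) < e) ->
    exists l : K, forall e : R, 0 < e -> exists M, forall n, (M <= n)%N ->
        abs (u n - l) < e.

Definition cball (K : fieldType) (R : realType) (abs : K -> R) (a : K) (r : R)
  : set K := [set x | abs (x - a) <= r].

Definition spherically_complete (K : fieldType) (R : realType) (abs : K -> R)
  : Prop :=
  forall (a : nat -> K) (r : nat -> R),
    (forall n, 0 < r n) ->
    (forall n, cball abs (a n.+1) (r n.+1) `<=` cball abs (a n) (r n)) ->
    exists x, forall n, cball abs (a n) (r n) x.

Definition value_group (K : fieldType) (R : realType) (abs : K -> R) : set R :=
  [set abs x | x in [set x : K | x != 0]].

Record na_norm (K : fieldType) (R : realType) (abs : K -> R)
  (E : lmodType K) (N : E -> R) : Prop := {
  norm_ge0 : forall x, 0 <= N x;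
  norm_eq0 : forall x, (N x = 0) <-> (x = 0);
  normZ : forall (a : K) x, N (a *: x) = abs a * N x;
  norm_ultra : forall x y, N (x + y) <= Num.max (N x) (N y) }.

Definition linear_on (K : fieldType) (E : vectType K) (D : {vspace E})
  (f : E -> K) : Prop :=
  forall (a : K) x y, x \in D -> y \in D -> f (a *: x + y) = a * f x + f y.

(* f is a bounded (= continuous) linear functional on D, i.e. f ∈ D' *)
Definition in_dual (K : fieldType) (R : realType) (abs : K -> R)
  (E : vectType K) (N : E -> R) (D : {vspace E}) (f : E -> K) : Prop :=
  linear_on D f /\ exists C : R, forall x, x \in D -> abs (f x) <= C * N x.

Definition opnorm (K : fieldType) (R : realType) (abs : K -> R)
  (E : vectType K) (N : E -> R) (D : {vspace E}) (f : E -> K) : R :=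
  sup [set abs (f x) / N x | x in [set x : E | x \in D /\ x != 0]].

Definition norm_set (K : fieldType) (R : realType) (E : vectType K)
  (N : E -> R) (D : {vspace E}) : set R :=
  [set N d | d in [set d : E | d \in D]].

From HB Require Import structures.
From mathcomp Require Import all_boot all_order all_algebra.
From mathcomp Require Import classical_sets reals.
From mathcomp Require Import ring lra.
Import Order.TTheory GRing.Theory Num.Theory.
Local Open Scope ring_scope.
Local Open Scope classical_set_scope.
Set Implicit Arguments.
Unset Strict Implicit.
Unset Printing Implicit Defensive.

(* If some [d] in [D] has [||d|| = |c|] with [c] in [K], the functional
   [k d |-> k c] has norm one; the kernel of a norm-one extension [g] is then a
   complement [F] with [||d + u|| = max (||d||, ||u||)], because
   [||d|| = |g (d + u)| <= ||d + u||] and the ultrametric inequality does the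
   rest.  Conversely, a norm-one [f] on the line [D] satisfies [|f d| = ||d||],
   so [||D||] meets [V_K], and an orthogonal complement [F] yields the extension
   of [f] by zero on [F], i.e. [f] composed with the projection onto [D] along
   [F]. *)

Section AbsoluteValue.
Variables (R : realType) (K : fieldType) (abs : K -> R).
Hypothesis habs : na_abs abs.

Lemma abs0 : abs 0 = 0.
Proof. exact/(abs_eq0 habs). Qed.

Lemma abs_neq0 x : x != 0 -> abs x != 0.
Proof. by apply: contraNneq => /(abs_eq0 habs) ->. Qed.

Lemma abs1 : abs 1 = 1.
Proof.
have := absM habs 1 1; rewrite mulr1 -{1}[abs 1]mul1r => /esym.
by apply: mulIf; rewrite abs_neq0 ?oner_eq0.
Qed.

Lemma absN1 : abs (-1) = 1.
Proof.
have := absM habs (-1) (-1); rewrite mulrNN mulr1 abs1.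
have := abs_ge0 habs (-1); nra.
Qed.

End AbsoluteValue.

Section NonArchimedeanNorm.
Variables (R : realType) (K : fieldType) (abs : K -> R) (E : lmodType K) (N : E -> R).
Hypotheses (habs : na_abs abs) (hN : na_norm abs N).

Lemma norm0 : N 0 = 0.
Proof. exact/(norm_eq0 hN). Qed.

Lemma normN x : N (- x) = N x.
Proof. by rewrite -scaleN1r (normZ hN) (absN1 habs) mul1r. Qed.

Lemma norm_gt0 x : x != 0 -> 0 < N x.
Proof.
move=> x0; rewrite lt_def (norm_ge0 hN) andbT.
by apply: contraNneq x0 => /(norm_eq0 hN)/eqP.
Qed.

Lemma norm_add_max x y : N x <= N (x + y) -> N (x + y) = Num.max (N x) (N y).
Proof.
move=> le_x_xy; apply/le_anti; rewrite (norm_ultra hN) ge_max le_x_xy /=.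
have := norm_ultra hN (x + y) (- x); rewrite normN addrC addKr le_max.
by case/orP=> // /le_trans; apply.
Qed.

End NonArchimedeanNorm.

Section LinearOn.
Variables (K : fieldType) (E : vectType K).

Lemma linear_on0 (D : {vspace E}) f : linear_on D f -> f 0 = 0.
Proof.
move=> hf; have := hf 1 0 0 (mem0v D) (mem0v D).
rewrite scale1r mul1r addr0 -{1}[f 0]addr0 => /(congr1 (fun t => - f 0 + t)).
by rewrite !addKr => <-.
Qed.

Lemma linear_onZ (D : {vspace E}) f a x : linear_on D f -> x \in D ->
  f (a *: x) = a * f x.
Proof. by move=> hf xD; rewrite -[_ *: x]addr0 hf ?mem0v // (linear_on0 hf) addr0. Qed.

Lemma linear_on_fullv f : linear_on fullv f -> linear (f : E -> K^o).
Proof. by move=> hf a x y; apply: hf; rewrite memvf. Qed.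

Definition lker_on f (hf : linear_on fullv f) : {vspace E} :=
  lker (linfun (HB.pack (f : E -> K^o)
    (GRing.isLinear.Build _ _ _ _ (f : E -> K^o) (linear_on_fullv hf))
    : {linear E -> K^o})).

Lemma mem_lker_on f (hf : linear_on fullv f) u : (u \in lker_on hf) = (f u == 0).
Proof. by rewrite memv_ker lfunE. Qed.

Lemma vline_add_lker_on f (hf : linear_on fullv f) d : f d != 0 ->
  (<[d]> + lker_on hf)%VS = fullv.
Proof.
move=> fd0; apply/eqP; rewrite eqEsubv subvf; apply/subvP => x _.
rewrite -[x](subrK ((f x / f d) *: d)) addrC memv_add ?memvZ ?memv_line //.
rewrite mem_lker_on addrC -scaleN1r hf ?memvf // (linear_onZ _ hf) ?memvf //.
by rewrite divfK // mulN1r addNr.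
Qed.

Lemma dimv1_vline (D : {vspace E}) d : \dim D = 1%N -> d \in D -> d != 0 ->
  D = <[d]>%VS.
Proof.
move=> dimD dD d0; have sub : (<[d]> <= D)%VS by rewrite -memvE.
by apply/esym/eqP; rewrite -(dimv_leqif_eq sub).2 dim_vline d0 dimD.
Qed.

Lemma vline_functional (d : E) (c : K) : d != 0 ->
  exists f : E -> K, linear_on <[d]> f /\ forall k, f (k *: d) = k * c.
Proof.
move=> d0; exists (fun x => coord [tuple d] ord0 x * c); split.
  by move=> a x y _ _ /=; rewrite linearP /=; ring.
by move=> k /=; rewrite linearZ /= (coord_free ord0 ord0) ?seq1_free //= mulr1.
Qed.

End LinearOn.

Section OperatorNorm.
Variables (R : realType) (K : fieldType) (abs : K -> R) (E : vectType K) (N : E -> R).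
Hypotheses (habs : na_abs abs) (hN : na_norm abs N).

Lemma opnorm1_le (D : {vspace E}) g : in_dual abs N D g ->
  opnorm abs N D g = 1 -> forall x, x \in D -> abs (g x) <= N x.
Proof.
move=> [hg [C hC]] g1 x xD.
have [->|x0] := eqVneq x 0; first by rewrite (linear_on0 hg) (abs0 habs) (norm0 hN).
have supS : has_sup [set abs (g x) / N x | x in [set x : E | x \in D /\ x != 0]].
  split; first by exists (abs (g x) / N x); exists x.
  by exists C => _ [y [yD y0] <-]; rewrite ler_pdivrMr ?(norm_gt0 hN) ?hC.
rewrite -[X in _ <= X]mul1r -ler_pdivrMr ?(norm_gt0 hN) // -g1.
by apply: sup_upper_bound => //; exists x.
Qed.

Lemma opnorm_eq1 (D : {vspace E}) g x0 : x0 \in D -> x0 != 0 ->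
  abs (g x0) = N x0 -> (forall x, x \in D -> abs (g x) <= N x) ->
  opnorm abs N D g = 1.
Proof.
move=> x0D x00 gx0 gle.
rewrite /opnorm; set S := [set abs (g x) / N x | x in _].
have S1 : S 1 by exists x0 => //; rewrite gx0 divff // lt0r_neq0 ?(norm_gt0 hN).
have ubS : ubound S 1.
  by move=> _ [y [yD y0] <-]; rewrite ler_pdivrMr ?(norm_gt0 hN) ?mul1r ?gle.
apply/le_anti; rewrite ge_sup //=; last by exists 1.
by apply: sup_upper_bound => //; split; exists 1.
Qed.

Lemma dimv1_opnorm1_isometric (D : {vspace E}) f : \dim D = 1%N ->
  in_dual abs N D f -> opnorm abs N D f = 1 -> forall x, x \in D -> abs (f x) = N x.
Proof.
move=> dimD [hf _] f1 x xD.
have [->|x0] := eqVneq x 0; first by rewrite (linear_on0 hf) (abs0 habs) (norm0 hN).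
have ratio y : y \in D -> y != 0 -> abs (f y) / N y = abs (f x) / N x.
  rewrite (dimv1_vline dimD xD x0) => /vlineP[k ->] ky0.
  have k0 : k != 0 by apply: contraNneq ky0 => ->; rewrite scale0r.
  rewrite (linear_onZ _ hf) ?memv_line // (normZ hN) (absM habs) invfM.
  by rewrite mulrACA divff ?mul1r // (abs_neq0 habs).
move: f1; rewrite /opnorm.
have -> : [set abs (f y) / N y | y in [set y : E | y \in D /\ y != 0]] =
          [set abs (f x) / N x].
  apply/seteqP; split=> [_ [y [yD y0] <-]|_ ->]; first exact: ratio.
  by exists x.
by rewrite sup1 => /divr1_eq.
Qed.

End OperatorNorm.

Section OrthogonalComplement.
Variables (R : realType) (K : fieldType) (abs : K -> R) (E : vectType K) (N : E -> R).
Hypotheses (habs : na_abs abs) (hN : na_norm abs N).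

Definition norm_orthogonal (D F : {vspace E}) : Prop :=
  forall d u, d \in D -> u \in F -> N (d + u) = Num.max (N d) (N u).

Lemma norm_orthogonal_cap0 D F : norm_orthogonal D F -> (D :&: F = 0)%VS.
Proof.
move=> orthDF; apply/eqP; rewrite -subv0; apply/subvP => x /memv_capP[xD xF].
have := orthDF x (- x) xD; rewrite memvN subrr (norm0 hN) (normN habs hN) maxxx.
by move=> /(_ xF)/esym/(norm_eq0 hN) ->; rewrite mem0v.
Qed.

Lemma norm_daddv_pi_le D F x : (D + F)%VS = fullv -> norm_orthogonal D F ->
  N (daddv_pi D F x) <= N x.
Proof.
move=> DF orthDF; rewrite -{2}[x](daddv_pi_add (norm_orthogonal_cap0 orthDF)).
  by rewrite orthDF ?memv_pi // le_max lexx.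
by rewrite DF memvf.
Qed.

Lemma extension_by_projection D F f : (D + F)%VS = fullv -> norm_orthogonal D F ->
  linear_on D f -> (forall x, x \in D -> abs (f x) <= N x) ->
  exists g : E -> K, [/\ linear_on fullv g, forall x, abs (g x) <= N x &
    forall d, d \in D -> g d = f d].
Proof.
move=> DF orthDF hf fle; exists (f \o daddv_pi D F); split=> [a x y _ _ | x | d dD] /=.
- by rewrite linearP /=; apply: hf; apply: memv_pi.
- exact: le_trans (fle _ (memv_pi _ _ _)) (norm_daddv_pi_le _ DF orthDF).
- by rewrite daddv_pi_id // (norm_orthogonal_cap0 orthDF).
Qed.

Lemma lker_on_norm_orthogonal (D : {vspace E}) g (hg : linear_on fullv g) :
  (forall x, abs (g x) <= N x) -> (forall d, d \in D -> abs (g d) = N d) ->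
  norm_orthogonal D (lker_on hg).
Proof.
move=> gle gD d u dD; rewrite mem_lker_on => /eqP gu0; apply: (norm_add_max habs hN).
have gdu : g (d + u) = g d.
  by rewrite -[d in d + u]scale1r hg ?memvf // mul1r gu0 addr0.
by rewrite -gD // -gdu gle.
Qed.

End OrthogonalComplement.

Section NormOneExtension.
Variables (R : realType) (K : fieldType) (abs : K -> R) (E : vectType K) (N : E -> R).
Hypotheses (habs : na_abs abs) (hN : na_norm abs N).
Variable D : {vspace E}.
Hypothesis dimD : \dim D = 1%N.

Definition norm1_extendable : Prop :=
  forall f : E -> K, in_dual abs N D f -> opnorm abs N D f = 1 ->
    exists g : E -> K, in_dual abs N fullv g /\ opnorm abs N fullv g = 1 /\
      (forall d, d \in D -> g d = f d).

Let vpick_neq0 : vpick D != 0.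
Proof. by rewrite vpick0 -dimv_eq0 dimD. Qed.

Lemma norm1_dual_value_group f : in_dual abs N D f -> opnorm abs N D f = 1 ->
  (norm_set N D `&` value_group abs) (N (vpick D)).
Proof.
move=> fdual f1; have fd := dimv1_opnorm1_isometric habs hN dimD fdual f1 (memv_pick D).
split; first by exists (vpick D) => //=; apply: memv_pick.
exists (f (vpick D)) => //=.
by apply: contraTneq (norm_gt0 hN vpick_neq0) => f0; rewrite -fd f0 (abs0 habs) ltxx.
Qed.

Lemma norm_orthogonal_complement_of_extendable :
  norm1_extendable -> norm_set N D `&` value_group abs != set0 ->
  exists F : {vspace E}, (D + F)%VS = fullv /\ norm_orthogonal N D F.
Proof.
move=> ext /set0P[_ [[d dD <-] [c c0 Ndc]]].
have d0 : d != 0.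
  by apply: contraNneq c0 => d0; apply/eqP/(abs_eq0 habs); rewrite Ndc d0 (norm0 hN).
have Dd := dimv1_vline dimD dD d0.
have [f [hf fk]] := vline_functional c d0.
have fD x : x \in D -> abs (f x) = N x.
  by rewrite Dd => /vlineP[k ->]; rewrite fk (normZ hN) (absM habs) Ndc.
have fdual : in_dual abs N D f.
  by split; [rewrite Dd | exists 1 => x /fD ->; rewrite mul1r].
have f1 : opnorm abs N D f = 1.
  by apply: (opnorm_eq1 hN dD d0 (fD d dD)) => x /fD ->.
have [g [gdual [g1 gf]]] := ext f fdual f1.
have [hg _] := gdual.
exists (lker_on hg); split.
- by rewrite Dd vline_add_lker_on // gf // -[d]scale1r fk mul1r.
- apply: (lker_on_norm_orthogonal habs hN) => [x|x xD].
    exact: (opnorm1_le habs hN gdual g1 (memvf x)).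
  by rewrite gf ?fD.
Qed.

Lemma extendable_of_norm_orthogonal_complement F :
  (D + F)%VS = fullv -> norm_orthogonal N D F -> norm1_extendable.
Proof.
move=> DF orthDF f fdual f1.
have fD := dimv1_opnorm1_isometric habs hN dimD fdual f1.
have fle x : x \in D -> abs (f x) <= N x by move/fD ->.
have [g [hg gle gf]] := extension_by_projection habs hN DF orthDF fdual.1 fle.
exists g; split; first by split=> //; exists 1 => x _; rewrite mul1r gle.
split=> //; apply: (opnorm_eq1 hN (memvf (vpick D)) vpick_neq0) => [|x _].
  by rewrite gf ?memv_pick // fD ?memv_pick.
exact: gle.
Qed.

End NormOneExtension.

Theorem mainTheorem6 (R : realType) (K : fieldType) (abs : K -> R)
  (habs : na_abs abs) (hnt : nontrivial_abs abs) (hcomp : complete_abs abs)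
  (hnsc : ~ spherically_complete abs)
  (E : vectType K) (N : E -> R) (hN : na_norm abs N)
  (D : {vspace E}) (hD : \dim D = 1%N) :
  (forall f : E -> K, in_dual abs N D f -> opnorm abs N D f = 1 ->
     exists g : E -> K, in_dual abs N fullv g /\ opnorm abs N fullv g = 1 /\
       (forall d, d \in D -> g d = f d))
  <->
  (norm_set N D `&` value_group abs = set0 \/
   exists F : {vspace E}, (D + F)%VS = fullv /\
     (forall d u, d \in D -> u \in F -> N (d + u) = Num.max (N d) (N u))).
Proof.
split=> [ext | [disjoint | [F [DF orthDF]]]].
- have [|meet] := eqVneq (norm_set N D `&` value_group abs) set0; first by left.
  by right; apply: (norm_orthogonal_complement_of_extendable habs hN hD).
- move=> f fdual f1; have := norm1_dual_value_group habs hN hD fdual f1.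
  by rewrite disjoint.
- exact: (extendable_of_norm_orthogonal_complement habs hN hD DF).
Qed.
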